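(* The set of defining sentences (first-order sentences over the vocabulary consisting of one binary relation symbol $\sim$, with equality) is undecidable.
   Context: A first-order sentence $A$ in the language with binary relation symbol $\sim$ and equality is called defining if there is a graph $G$ (a structure in which $\sim$ is irreflexive and symmetric) such that $A$ is true on $G$ and false on every structure for this language (of any cardinality) that is not isomorphic to $G$. *)

From Stdlib Require Import Arith List.
Import ListNotations.

Inductive form : Type :=
  | Rel (i j : nat)
  | Eq  (i j : nat)
  | Bot
  | Imp (a b : form)
  | All (a : form).          (* forall x_0, a  (binds index 0) *)
(* The other connectives/quantifiers are the usual classical abbreviations. *)

Fixpoint bound (k : nat) (f : form) : Prop :=
  match f with
  | Rel i j | Eq i j => i < k /\ j < k
  | Bot => True
  | Imp a b => bound k a /\ bound k b
  | All a => bound (S k) a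
  end.

Definition sentence (f : form) : Prop := bound 0 f.

Definition scons {D : Type} (d : D) (rho : nat -> D) (n : nat) : D :=
  match n with 0 => d | S m => rho m end.

Fixpoint holds {D : Type} (R : D -> D -> Prop) (rho : nat -> D) (f : form) : Prop :=
  match f with
  | Rel i j => R (rho i) (rho j)
  | Eq i j => rho i = rho j
  | Bot => False
  | Imp a b => holds R rho a -> holds R rho b
  | All a => forall d : D, holds R (scons d rho) a
  end.

Record structure : Type := Structure {
  dom : Type;
  rel : dom -> dom -> Prop;
  dom_inhabited : inhabited dom
}.

Definition models (M : structure) (A : form) : Prop :=
  forall rho : nat -> dom M, holds (rel M) rho A.

Definition is_graph (M : structure) : Prop :=
  (forall x : dom M, ~ rel M x x) /\
  (forall x y : dom M, rel M x y -> rel M y x).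

Definition isomorphic (M N : structure) : Prop :=
  exists (f : dom M -> dom N) (g : dom N -> dom M),
    (forall x, g (f x) = x) /\ (forall y, f (g y) = y) /\
    (forall x y, rel M x y <-> rel N (f x) (f y)).

Definition defining (A : form) : Prop :=
  sentence A /\
  exists G : structure,
    is_graph G /\ models G A /\
    (forall M : structure, ~ isomorphic M G -> ~ models M A).

Definition cpair (a b : nat) : nat := (a + b) * (a + b + 1) / 2 + b.

Fixpoint code (f : form) : nat :=
  match f with
  | Rel i j => 5 * cpair i j
  | Eq i j => 5 * cpair i j + 1
  | Bot => 2
  | Imp a b => 5 * cpair (code a) (code b) + 3
  | All a => 5 * code a + 4
  end.

Inductive recf : Type :=
  | RZero
  | RSucc
  | RProj (i : nat)
  | RComp (f : recf) (gs : list recf)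
  | RPrim (f g : recf)
  | RMu (f : recf).

Inductive eval : recf -> list nat -> nat -> Prop :=
  | ev_zero v : eval RZero v 0
  | ev_succ x v : eval RSucc (x :: v) (S x)
  | ev_proj i v : i < length v -> eval (RProj i) v (nth i v 0)
  | ev_comp f gs v ws y : evals gs v ws -> eval f ws y -> eval (RComp f gs) v y
  | ev_prim0 f g v y : eval f v y -> eval (RPrim f g) (0 :: v) y
  | ev_primS f g n v r y :
      eval (RPrim f g) (n :: v) r -> eval g (n :: r :: v) y ->
      eval (RPrim f g) (S n :: v) y
  | ev_mu f v n :
      eval f (n :: v) 0 ->
      (forall m, m < n -> exists k, eval f (m :: v) (S k)) ->
      eval (RMu f) v n
with evals : list recf -> list nat -> list nat -> Prop :=
  | evs_nil v : evals nil v nil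
  | evs_cons g gs v w ws : eval g v w -> evals gs v ws -> evals (g :: gs) v (w :: ws).

Definition decidable_set (P : nat -> Prop) : Prop :=
  exists f : recf, forall n : nat,
    (P n /\ eval f [n] 1) \/ (~ P n /\ eval f [n] 0).

From Stdlib Require Import Arith List Lia Classical ClassicalEpsilon.
Import ListNotations.

(* Suppose a mu-recursive [f] decided which codes are codes of defining sentences.
   The sentence [TrivialOrAccepts h c] says: the structure is a single loopless point,
   or it contains a run of the program [h] on input [c] ending with output 1. Runs are
   encoded by labelled edges between vertices standing for numbers and lists, with
   just enough axioms that any run found in a model agrees with the true evaluation.
   Hence if [h] rejects [c] the one-point graph is the only model and the sentence is
   defining, while if [h] accepts [c] the standard model of the computation is a second,
   non-isomorphic model and the sentence is not defining. A quine construction yields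
   [h := diag f] and [c] for which [h] on [c] runs [f] on the code of this very
   sentence, so [f] answers wrongly on it. *)

Definition And (a b : form) : form := Imp (Imp a (Imp b Bot)) Bot.
Definition Or (a b : form) : form := Imp (Imp a Bot) b.
Definition Ex (a : form) : form := Imp (All (Imp a Bot)) Bot.

Section DerivedConnectives.
Context {D : Type} (R : D -> D -> Prop) (rho : nat -> D).

Lemma holds_And a b : holds R rho (And a b) <-> holds R rho a /\ holds R rho b.
Proof.
  cbn; split.
  - intro H; split; apply NNPP; intro N; apply H; tauto.
  - intros [Ha Hb] H; exact (H Ha Hb).
Qed.

Lemma holds_Or a b : holds R rho (Or a b) <-> holds R rho a \/ holds R rho b.
Proof. cbn; destruct (classic (holds R rho a)); tauto. Qed.

Lemma holds_Ex a : holds R rho (Ex a) <-> exists d, holds R (scons d rho) a.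
Proof.
  cbn; split.
  - intro H; apply NNPP; intro N; apply H; intros d Hd; apply N; eauto.
  - intros [d Hd] H; exact (H d Hd).
Qed.

End DerivedConnectives.

(** * Formulas with named variables *)

Inductive hform (V : Type) : Type :=
  | HRel (a b : V)
  | HLab (l a b : V)
  | HEq (a b : V)
  | HBot
  | HImp (p q : hform V)
  | HAnd (p q : hform V)
  | HOr (p q : hform V)
  | HAll (B : V -> hform V)
  | HEx (B : V -> hform V).
Arguments HRel {V}. Arguments HLab {V}. Arguments HEq {V}. Arguments HBot {V}.
Arguments HImp {V}. Arguments HAnd {V}. Arguments HOr {V}.
Arguments HAll {V}. Arguments HEx {V}.

(* The labelled edge [a -l-> b] is realised by a middle vertex adjacent to [a], [b]
   and [l]; the clause [~ R b b] keeps the label vertices, which carry loops in the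
   standard model below, from being endpoints. *)
Definition lab_edge {D : Type} (R : D -> D -> Prop) (l a b : D) : Prop :=
  exists t, R a t /\ R t b /\ R t l /\ ~ R b b.

Fixpoint hsem {D : Type} (R : D -> D -> Prop) (p : hform D) : Prop :=
  match p with
  | HRel a b => R a b
  | HLab l a b => lab_edge R l a b
  | HEq a b => a = b
  | HBot => False
  | HImp p q => hsem R p -> hsem R q
  | HAnd p q => hsem R p /\ hsem R q
  | HOr p q => hsem R p \/ hsem R q
  | HAll B => forall x, hsem R (B x)
  | HEx B => exists x, hsem R (B x)
  end.

(* In [compile d] the variables are de Bruijn levels: the one bound by the [k]-th
   enclosing quantifier is [k], i.e. the index [d - 1 - k] at depth [d]. *)
Fixpoint compile (d : nat) (p : hform nat) : form :=
  match p with
  | HRel a b => Rel (d - 1 - a) (d - 1 - b)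
  | HLab l a b =>
      Ex (And (Rel (d - a) 0) (And (Rel 0 (d - b))
            (And (Rel 0 (d - l)) (Imp (Rel (d - b) (d - b)) Bot))))
  | HEq a b => Eq (d - 1 - a) (d - 1 - b)
  | HBot => Bot
  | HImp p q => Imp (compile d p) (compile d q)
  | HAnd p q => And (compile d p) (compile d q)
  | HOr p q => Or (compile d p) (compile d q)
  | HAll B => All (compile (S d) (B d))
  | HEx B => Ex (compile (S d) (B d))
  end.

(* Stands in for the parametricity of the formula builders below: [ctx] pairs the
   levels of [p] with the elements of [D] they stand for in [q]. *)
Inductive hequiv {D : Type} : list (nat * D) -> hform nat -> hform D -> Prop :=
  | hequiv_rel ctx a1 a2 b1 b2 :
      In (a1, a2) ctx -> In (b1, b2) ctx -> hequiv ctx (HRel a1 b1) (HRel a2 b2)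
  | hequiv_lab ctx l1 l2 a1 a2 b1 b2 :
      In (l1, l2) ctx -> In (a1, a2) ctx -> In (b1, b2) ctx ->
      hequiv ctx (HLab l1 a1 b1) (HLab l2 a2 b2)
  | hequiv_eq ctx a1 a2 b1 b2 :
      In (a1, a2) ctx -> In (b1, b2) ctx -> hequiv ctx (HEq a1 b1) (HEq a2 b2)
  | hequiv_bot ctx : hequiv ctx HBot HBot
  | hequiv_imp ctx p1 p2 q1 q2 :
      hequiv ctx p1 p2 -> hequiv ctx q1 q2 -> hequiv ctx (HImp p1 q1) (HImp p2 q2)
  | hequiv_and ctx p1 p2 q1 q2 :
      hequiv ctx p1 p2 -> hequiv ctx q1 q2 -> hequiv ctx (HAnd p1 q1) (HAnd p2 q2)
  | hequiv_or ctx p1 p2 q1 q2 :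
      hequiv ctx p1 p2 -> hequiv ctx q1 q2 -> hequiv ctx (HOr p1 q1) (HOr p2 q2)
  | hequiv_all ctx B1 B2 :
      (forall x, hequiv ((length ctx, x) :: ctx) (B1 (length ctx)) (B2 x)) ->
      hequiv ctx (HAll B1) (HAll B2)
  | hequiv_ex ctx B1 B2 :
      (forall x, hequiv ((length ctx, x) :: ctx) (B1 (length ctx)) (B2 x)) ->
      hequiv ctx (HEx B1) (HEx B2).

Definition env_agrees {D : Type} (ctx : list (nat * D)) (rho : nat -> D) : Prop :=
  forall a x, In (a, x) ctx -> a < length ctx /\ rho (length ctx - 1 - a) = x.

Lemma env_agrees_cons {D : Type} (ctx : list (nat * D)) rho x :
  env_agrees ctx rho -> env_agrees ((length ctx, x) :: ctx) (scons x rho).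
Proof.
  intros H a y [E | Hin]; cbn.
  - injection E as <- <-. split; [lia |]. now replace (length ctx - 0 - length ctx) with 0 by lia.
  - destruct (H a y Hin) as [Ha E]. split; [lia |].
    now replace (length ctx - 0 - a) with (S (length ctx - 1 - a)) by lia.
Qed.

Lemma holds_compile {D : Type} (R : D -> D -> Prop) ctx p1 p2 :
  hequiv ctx p1 p2 -> forall rho, env_agrees ctx rho ->
  (holds R rho (compile (length ctx) p1) <-> hsem R p2).
Proof.
  induction 1 as [ctx a1 a2 b1 b2 Ha Hb | ctx l1 l2 a1 a2 b1 b2 Hl Ha Hb
    | ctx a1 a2 b1 b2 Ha Hb | | ctx p1 p2 q1 q2 _ IHp _ IHq | ctx p1 p2 q1 q2 _ IHp _ IHq
    | ctx p1 p2 q1 q2 _ IHp _ IHq | ctx B1 B2 _ IH | ctx B1 B2 _ IH];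
    intros rho Hrho; cbn [compile hsem length].
  - destruct (Hrho _ _ Ha) as [_ <-], (Hrho _ _ Hb) as [_ <-]. reflexivity.
  - destruct (Hrho _ _ Hl) as [Hl' El], (Hrho _ _ Ha) as [Ha' Ea], (Hrho _ _ Hb) as [Hb' Eb].
    rewrite holds_Ex. unfold lab_edge.
    replace (length ctx - a1) with (S (length ctx - 1 - a1)) by lia.
    replace (length ctx - b1) with (S (length ctx - 1 - b1)) by lia.
    replace (length ctx - l1) with (S (length ctx - 1 - l1)) by lia.
    split; intros [t Ht]; exists t; revert Ht; rewrite !holds_And; cbn;
      rewrite El, Ea, Eb; tauto.
  - destruct (Hrho _ _ Ha) as [_ <-], (Hrho _ _ Hb) as [_ <-]. reflexivity.
  - reflexivity.
  - cbn. rewrite (IHp rho Hrho), (IHq rho Hrho). reflexivity.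
  - rewrite holds_And, (IHp rho Hrho), (IHq rho Hrho). reflexivity.
  - rewrite holds_Or, (IHp rho Hrho), (IHq rho Hrho). reflexivity.
  - cbn. split; intros H x; apply (IH x (scons x rho) (env_agrees_cons ctx rho x Hrho)), H.
  - rewrite holds_Ex.
    split; intros [x H]; exists x; apply (IH x (scons x rho) (env_agrees_cons ctx rho x Hrho)), H.
Qed.

Lemma bound_compile {D : Type} (d0 : D) (ctx : list (nat * D)) p1 p2 :
  hequiv ctx p1 p2 -> (forall a x, In (a, x) ctx -> a < length ctx) ->
  bound (length ctx) (compile (length ctx) p1).
Proof.
  assert (Hcons : forall (c : list (nat * D)) x,
    (forall a y, In (a, y) c -> a < length c) ->
    forall a y, In (a, y) ((length c, x) :: c) -> a < length ((length c, x) :: c)).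
  { intros c x H a y [E | Hin]; cbn; [injection E as <- _; lia | specialize (H a y Hin); lia]. }
  induction 1 as [ctx a1 a2 b1 b2 Ha Hb | ctx l1 l2 a1 a2 b1 b2 Hl Ha Hb
    | ctx a1 a2 b1 b2 Ha Hb | | ctx p1 p2 q1 q2 _ IHp _ IHq | ctx p1 p2 q1 q2 _ IHp _ IHq
    | ctx p1 p2 q1 q2 _ IHp _ IHq | ctx B1 B2 _ IH | ctx B1 B2 _ IH]; intros H; cbn.
  - pose proof (H _ _ Ha); pose proof (H _ _ Hb); lia.
  - pose proof (H _ _ Hl); pose proof (H _ _ Ha); pose proof (H _ _ Hb); repeat split; lia.
  - pose proof (H _ _ Ha); pose proof (H _ _ Hb); lia.
  - exact I.
  - auto.
  - repeat split; auto.
  - repeat split; auto.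
  - exact (IH d0 (Hcons ctx d0 H)).
  - repeat split. exact (IH d0 (Hcons ctx d0 H)).
Qed.

Lemma models_compile (M : structure) p1 p2 :
  hequiv [] p1 p2 -> (models M (compile 0 p1) <-> hsem (rel M) p2).
Proof.
  intro E. destruct (dom_inhabited M) as [d0]. split.
  - intro H. apply (holds_compile (rel M) [] p1 p2 E (fun _ => d0)); [intros a x [] | apply H].
  - intros H rho. apply (holds_compile (rel M) [] p1 p2 E rho); [intros a x [] | exact H].
Qed.

Lemma sentence_compile {D : Type} (d0 : D) p1 (p2 : hform D) :
  hequiv [] p1 p2 -> sentence (compile 0 p1).
Proof. intro E. exact (bound_compile d0 [] p1 p2 E (fun a x H => match H with end)). Qed.

(** * Mu-recursive functions *)

(* The induction principle generated for [eval] gives no hypothesis for the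
   evaluations hidden under the existential of [ev_mu]. *)
Section EvalNestedInd.
Variable P : recf -> list nat -> nat -> Prop.
Variable Q : list recf -> list nat -> list nat -> Prop.
Hypothesis Hzero : forall v, P RZero v 0.
Hypothesis Hsucc : forall x v, P RSucc (x :: v) (S x).
Hypothesis Hproj : forall i v, i < length v -> P (RProj i) v (nth i v 0).
Hypothesis Hcomp : forall f gs v ws y,
  evals gs v ws -> Q gs v ws -> eval f ws y -> P f ws y -> P (RComp f gs) v y.
Hypothesis Hprim0 : forall f g v y, eval f v y -> P f v y -> P (RPrim f g) (0 :: v) y.
Hypothesis HprimS : forall f g n v r y,
  eval (RPrim f g) (n :: v) r -> P (RPrim f g) (n :: v) r ->
  eval g (n :: r :: v) y -> P g (n :: r :: v) y -> P (RPrim f g) (S n :: v) y.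
Hypothesis Hmu : forall f v n, eval f (n :: v) 0 -> P f (n :: v) 0 ->
  (forall m, m < n -> exists k, eval f (m :: v) (S k) /\ P f (m :: v) (S k)) ->
  P (RMu f) v n.
Hypothesis Hnil : forall v, Q nil v nil.
Hypothesis Hcons : forall g gs v w ws,
  eval g v w -> P g v w -> evals gs v ws -> Q gs v ws -> Q (g :: gs) v (w :: ws).

Fixpoint eval_nested_ind p v y (H : eval p v y) {struct H} : P p v y :=
  match H in eval p v y return P p v y with
  | ev_zero v => Hzero v
  | ev_succ x v => Hsucc x v
  | ev_proj i v h => Hproj i v h
  | ev_comp f gs v ws y H1 H2 =>
      Hcomp f gs v ws y H1 (evals_nested_ind gs v ws H1) H2 (eval_nested_ind f ws y H2)
  | ev_prim0 f g v y H1 => Hprim0 f g v y H1 (eval_nested_ind f v y H1)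
  | ev_primS f g n v r y H1 H2 =>
      HprimS f g n v r y H1 (eval_nested_ind _ _ _ H1) H2 (eval_nested_ind _ _ _ H2)
  | ev_mu f v n H1 H2 =>
      Hmu f v n H1 (eval_nested_ind _ _ _ H1)
        (fun m hm => match H2 m hm with
                     | ex_intro _ k Hk => ex_intro _ k (conj Hk (eval_nested_ind _ _ _ Hk))
                     end)
  end
with evals_nested_ind gs v ws (H : evals gs v ws) {struct H} : Q gs v ws :=
  match H in evals gs v ws return Q gs v ws with
  | evs_nil v => Hnil v
  | evs_cons g gs v w ws H1 H2 =>
      Hcons g gs v w ws H1 (eval_nested_ind _ _ _ H1) H2 (evals_nested_ind _ _ _ H2)
  end.

End EvalNestedInd.

Section RecfNestedInd.
Variable P : recf -> Prop.
Hypothesis Hzero : P RZero.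
Hypothesis Hsucc : P RSucc.
Hypothesis Hproj : forall i, P (RProj i).
Hypothesis Hcomp : forall f gs, P f -> Forall P gs -> P (RComp f gs).
Hypothesis Hprim : forall f g, P f -> P g -> P (RPrim f g).
Hypothesis Hmu : forall f, P f -> P (RMu f).

Fixpoint recf_nested_ind (r : recf) : P r :=
  match r with
  | RZero => Hzero
  | RSucc => Hsucc
  | RProj i => Hproj i
  | RComp f gs =>
      Hcomp f gs (recf_nested_ind f)
        ((fix all (gs : list recf) : Forall P gs :=
            match gs with
            | [] => Forall_nil P
            | g :: gs' => Forall_cons g (recf_nested_ind g) (all gs')
            end) gs)
  | RPrim f g => Hprim f g (recf_nested_ind f) (recf_nested_ind g)
  | RMu f => Hmu f (recf_nested_ind f)
  end.

End RecfNestedInd.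

Fixpoint subterms (p : recf) : list recf :=
  match p with
  | RComp f gs => p :: subterms f ++ flat_map subterms gs
  | RPrim f g => p :: subterms f ++ subterms g
  | RMu f => p :: subterms f
  | _ => [p]
  end.

Lemma in_subterms_self p : In p (subterms p).
Proof. destruct p; now left. Qed.

Lemma subterms_incl p q : In q (subterms p) -> incl (subterms q) (subterms p).
Proof.
  revert q; induction p as [| | i | f gs IHf IHgs | f g IHf IHg | f IHf] using recf_nested_ind;
    cbn; intros q [<- | Hq]; try apply incl_refl; try contradiction.
  - apply incl_tl. apply in_app_or in Hq as [Hq | Hq].
    + apply incl_appl, IHf, Hq.
    + apply incl_appr. apply in_flat_map in Hq as [g [Hg Hq]].
      rewrite Forall_forall in IHgs. intros x Hx.
      apply in_flat_map. exists g. split; [exact Hg | exact (IHgs g Hg q Hq x Hx)].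
  - apply incl_tl. apply in_app_or in Hq as [Hq | Hq].
    + apply incl_appl, IHf, Hq.
    + apply incl_appr, IHg, Hq.
  - apply incl_tl, IHf, Hq.
Qed.

Definition subterm_closed (L : list recf) : Prop :=
  (forall f gs, In (RComp f gs) L -> In f L /\ forall g, In g gs -> In g L) /\
  (forall f g, In (RPrim f g) L -> In f L /\ In g L) /\
  (forall f, In (RMu f) L -> In f L).

Lemma subterm_closed_subterms h : subterm_closed (subterms h).
Proof.
  split; [| split].
  - intros f gs H. pose proof (subterms_incl h _ H) as I. split.
    + apply I. right. apply in_or_app. left. apply in_subterms_self.
    + intros g Hg. apply I. right. apply in_or_app. right. apply in_flat_map.
      exists g. split; [exact Hg | apply in_subterms_self].
  - intros f g H. pose proof (subterms_incl h _ H) as I.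
    split; apply I; right; apply in_or_app; [left | right]; apply in_subterms_self.
  - intros f H. apply (subterms_incl h _ H). right. apply in_subterms_self.
Qed.

Fixpoint rconst (k : nat) : recf :=
  match k with 0 => RZero | S k => RComp RSucc [rconst k] end.

Lemma eval_rconst k v : eval (rconst k) v k.
Proof.
  induction k; cbn; [constructor |].
  econstructor; [econstructor; [exact IHk | constructor] |]. constructor.
Qed.

Definition radd : recf := RPrim (RProj 0) (RComp RSucc [RProj 1]).

Lemma eval_radd a b v : eval radd (a :: b :: v) (a + b).
Proof.
  induction a; cbn.
  - constructor. apply (ev_proj 0 (b :: v)). cbn; lia.
  - eapply ev_primS; [exact IHa |]. econstructor; [| constructor].
    econstructor; [| constructor]. apply (ev_proj 1 (a :: a + b :: b :: v)). cbn; lia.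
Qed.

Definition rmul : recf := RPrim RZero (RComp radd [RProj 1; RProj 2]).

Lemma eval_rmul a b v : eval rmul (a :: b :: v) (a * b).
Proof.
  induction a; cbn; [constructor; constructor |].
  rewrite Nat.add_comm. eapply ev_primS; [exact IHa |].
  econstructor; [| apply eval_radd]. econstructor.
  - apply (ev_proj 1 (a :: a * b :: b :: v)). cbn; lia.
  - econstructor; [| constructor]. apply (ev_proj 2 (a :: a * b :: b :: v)). cbn; lia.
Qed.

Fixpoint tri (n : nat) : nat := match n with 0 => 0 | S n => S (n + tri n) end.

Definition rtri : recf := RPrim RZero (RComp RSucc [RComp radd [RProj 0; RProj 1]]).

Lemma eval_rtri n v : eval rtri (n :: v) (tri n).
Proof.
  induction n; cbn; [constructor; constructor |].
  eapply ev_primS; [exact IHn |]. econstructor; [| constructor].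
  econstructor; [| constructor]. econstructor; [| apply eval_radd]. econstructor.
  - apply (ev_proj 0 (n :: tri n :: v)). cbn; lia.
  - econstructor; [| constructor]. apply (ev_proj 1 (n :: tri n :: v)). cbn; lia.
Qed.

Lemma cpair_tri a b : cpair a b = tri (a + b) + b.
Proof.
  assert (Htri : forall n, 2 * tri n = n * (n + 1)) by (induction n; cbn [tri]; lia).
  unfold cpair. f_equal. rewrite <- Htri, Nat.mul_comm. apply Nat.div_mul. lia.
Qed.

Definition rcpair : recf := RComp radd [RComp rtri [RComp radd [RProj 0; RProj 1]]; RProj 1].

Lemma eval_rcpair a b v : eval rcpair (a :: b :: v) (cpair a b).
Proof.
  rewrite cpair_tri. econstructor; [| apply eval_radd]. econstructor.
  - econstructor; [| apply eval_rtri]. econstructor; [| constructor].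
    econstructor; [| apply eval_radd]. econstructor.
    + apply (ev_proj 0 (a :: b :: v)). cbn; lia.
    + econstructor; [| constructor]. apply (ev_proj 1 (a :: b :: v)). cbn; lia.
  - econstructor; [| constructor]. apply (ev_proj 1 (a :: b :: v)). cbn; lia.
Qed.

Inductive aexp : Type :=
  | AVar (i : nat)
  | AConst (k : nat)
  | AAdd (a b : aexp)
  | AMul (a b : aexp)
  | APair (a b : aexp).

Fixpoint aeval (v : list nat) (e : aexp) : nat :=
  match e with
  | AVar i => nth i v 0
  | AConst k => k
  | AAdd a b => aeval v a + aeval v b
  | AMul a b => aeval v a * aeval v b
  | APair a b => cpair (aeval v a) (aeval v b)
  end.

Fixpoint avars_below (n : nat) (e : aexp) : Prop :=
  match e with
  | AVar i => i < n
  | AConst _ => True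
  | AAdd a b | AMul a b | APair a b => avars_below n a /\ avars_below n b
  end.

Fixpoint acompile (e : aexp) : recf :=
  match e with
  | AVar i => RProj i
  | AConst k => rconst k
  | AAdd a b => RComp radd [acompile a; acompile b]
  | AMul a b => RComp rmul [acompile a; acompile b]
  | APair a b => RComp rcpair [acompile a; acompile b]
  end.

Lemma eval_acompile e v : avars_below (length v) e -> eval (acompile e) v (aeval v e).
Proof.
  induction e as [i | k | a IHa b IHb | a IHa b IHb | a IHa b IHb]; cbn; intro H.
  - constructor. exact H.
  - apply eval_rconst.
  - destruct H. econstructor; [| apply eval_radd].
    econstructor; [auto | econstructor; [auto | constructor]].
  - destruct H. econstructor; [| apply eval_rmul].
    econstructor; [auto | econstructor; [auto | constructor]].
  - destruct H. econstructor; [| apply eval_rcpair].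
    econstructor; [auto | econstructor; [auto | constructor]].
Qed.

Lemma cpair_inj a b a' b' : cpair a b = cpair a' b' -> a = a' /\ b = b'.
Proof.
  assert (Hmono : forall m n, m <= n -> tri m <= tri n) by (induction 1; cbn; lia).
  rewrite !cpair_tri. intro E.
  assert (Hsum : a + b = a' + b').
  { destruct (lt_eq_lt_dec (a + b) (a' + b')) as [[Hl | Hl] | Hl]; [| exact Hl |].
    - specialize (Hmono _ _ Hl). cbn in Hmono. lia.
    - specialize (Hmono _ _ Hl). cbn in Hmono. lia. }
  rewrite Hsum in E. lia.
Qed.

Lemma code_inj A B : code A = code B -> A = B.
Proof.
  revert B; induction A as [i j | i j | | A1 IH1 A2 IH2 | A IH];
    intros [i' j' | i' j' | | B1 B2 | B]; cbn [code]; intro E; try lia.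
  1, 2: destruct (cpair_inj i j i' j') as [-> ->]; [lia | reflexivity].
  - reflexivity.
  - destruct (cpair_inj (code A1) (code A2) (code B1) (code B2)) as [E1 E2]; [lia |].
    now rewrite (IH1 _ E1), (IH2 _ E2).
  - f_equal. apply IH. lia.
Qed.

Definition cimp (a b : nat) : nat := 5 * cpair a b + 3.
Definition call (a : nat) : nat := 5 * a + 4.
Definition cex (a : nat) : nat := cimp (call (cimp a 2)) 2.
Definition cand (a b : nat) : nat := cimp (cimp a (cimp b 2)) 2.
Definition cor (a b : nat) : nat := cimp (cimp a 2) b.

Lemma code_Imp a b : code (Imp a b) = cimp (code a) (code b).
Proof. reflexivity. Qed.
Lemma code_All a : code (All a) = call (code a).
Proof. reflexivity. Qed.
Lemma code_Ex a : code (Ex a) = cex (code a).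
Proof. reflexivity. Qed.
Lemma code_And a b : code (And a b) = cand (code a) (code b).
Proof. reflexivity. Qed.
Lemma code_Or a b : code (Or a b) = cor (code a) (code b).
Proof. reflexivity. Qed.

Definition eimp (a b : aexp) : aexp := AAdd (AMul (AConst 5) (APair a b)) (AConst 3).
Definition eall (a : aexp) : aexp := AAdd (AMul (AConst 5) a) (AConst 4).
Definition eex (a : aexp) : aexp := eimp (eall (eimp a (AConst 2))) (AConst 2).
Definition eand (a b : aexp) : aexp := eimp (eimp a (eimp b (AConst 2))) (AConst 2).
Definition eor (a b : aexp) : aexp := eimp (eimp a (AConst 2)) b.

Lemma aeval_eimp v a b : aeval v (eimp a b) = cimp (aeval v a) (aeval v b).
Proof. reflexivity. Qed.
Lemma aeval_eall v a : aeval v (eall a) = call (aeval v a).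
Proof. reflexivity. Qed.
Lemma aeval_eex v a : aeval v (eex a) = cex (aeval v a).
Proof. reflexivity. Qed.
Lemma aeval_eand v a b : aeval v (eand a b) = cand (aeval v a) (aeval v b).
Proof. reflexivity. Qed.
Lemma aeval_eor v a b : aeval v (eor a b) = cor (aeval v a) (aeval v b).
Proof. reflexivity. Qed.

Definition HTrue {V : Type} : hform V := HImp HBot HBot.
Definition HAll2 {V : Type} (B : V -> V -> hform V) : hform V :=
  HAll (fun a => HAll (fun b => B a b)).
Definition HAll3 {V : Type} (B : V -> V -> V -> hform V) : hform V :=
  HAll (fun a => HAll (fun b => HAll (fun c => B a b c))).
Definition HEx2 {V : Type} (B : V -> V -> hform V) : hform V :=
  HEx (fun a => HEx (fun b => B a b)).

Fixpoint HAndList {V : Type} (ps : list (hform V)) : hform V :=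
  match ps with [] => HTrue | p :: ps => HAnd p (HAndList ps) end.

Fixpoint HExList {V : Type} (n : nat) (B : list V -> hform V) : hform V :=
  match n with 0 => B [] | S n => HEx (fun x => HExList n (fun xs => B (x :: xs))) end.

Definition Trivial {V : Type} : hform V :=
  HAnd (HAll2 (fun x y => HEq x y)) (HAll (fun x => HImp (HRel x x) HBot)).

(* The inner numeral rebinds [s] and [z] right after [w], so that at every depth
   it is a shifted copy of the same formula; see [ncode_S]. *)
Fixpoint Numeral {V : Type} (x : nat) (v s z : V) : hform V :=
  match x with
  | 0 => HLab z v v
  | S x => HEx (fun w => HAnd (HLab s w v) (HAll2 (fun s' z' =>
             HImp (HEq s' s) (HImp (HEq z' z) (Numeral x w s' z')))))
  end.

Section Atoms.
Context {V : Type} (s z : V) (lab : nat -> V) (ix : recf -> nat).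

Definition Succ a b := HLab s a b.
Definition Zero a := HLab z a a.
Definition IsNat a := HLab (lab 0) a a.
Definition Less a b := HLab (lab 1) a b.
Definition Hd l a := HLab (lab 2) l a.
Definition Tl l l' := HLab (lab 3) l l'.
Definition Nil l := HLab (lab 4) l l.
Definition Call p l y := HLab (lab (5 + ix p)) l y.

Definition BaseAxioms : hform V :=
  HAnd (HEx (fun a => Zero a)) (
  HAnd (HAll2 (fun a b => HImp (Zero a) (HImp (Zero b) (HEq a b)))) (
  HAnd (HAll (fun a => HImp (Zero a) (IsNat a))) (
  HAnd (HAll (fun a => HImp (IsNat a) (HEx (fun b => Succ a b)))) (
  HAnd (HAll2 (fun a b => HImp (Succ a b) (IsNat b))) (
  HAnd (HAll3 (fun a b c => HImp (Succ a b) (HImp (Succ a c) (HEq b c)))) (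
  HAnd (HAll3 (fun a b c => HImp (Succ a c) (HImp (Succ b c) (HEq a b)))) (
  HAnd (HAll2 (fun a b => HImp (Succ a b) (HImp (Zero b) HBot))) (
  HAnd (HAll2 (fun a b => HImp (IsNat a) (HImp (IsNat b)
         (HOr (Less a b) (HOr (HEq a b) (Less b a)))))) (
  HAnd (HAll2 (fun x a => HImp (Zero a) (HImp (Less x a) HBot))) (
  HAnd (HAll3 (fun x y sy => HImp (Succ y sy) (HImp (Less x sy) (HOr (Less x y) (HEq x y))))) (
  HAnd (HAll3 (fun l a b => HImp (Hd l a) (HImp (Hd l b) (HEq a b))))
       (HAll3 (fun l a b => HImp (Tl l a) (HImp (Tl l b) (HEq a b))))))))))))))).

Fixpoint NthIs (i : nat) (l y : V) : hform V :=
  match i with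
  | 0 => Hd l y
  | S i => HEx (fun l' => HAnd (Tl l l') (NthIs i l' y))
  end.

Fixpoint MapCall (gs : list recf) (l l0 : V) : hform V :=
  match gs with
  | [] => Nil l0
  | g :: gs => HEx (fun w => HAnd (Hd l0 w) (HAnd (Call g l w)
                 (HEx (fun l1 => HAnd (Tl l0 l1) (MapCall gs l l1)))))
  end.

(* The rules of [eval] read backwards at [Call p l y]. *)
Definition Unfold (p : recf) (l y : V) : hform V :=
  match p with
  | RZero => Zero y
  | RSucc => HEx (fun x => HAnd (Hd l x) (Succ x y))
  | RProj i => NthIs i l y
  | RComp f gs => HEx (fun l0 => HAnd (MapCall gs l l0) (Call f l0 y))
  | RPrim f g => HEx2 (fun x l2 => HAnd (Hd l x) (HAnd (Tl l l2)
       (HOr (HAnd (Zero x) (Call f l2 y))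
            (HEx (fun p => HEx (fun r => HEx (fun lp => HEx (fun lg => HEx (fun lg' =>
               HAnd (Succ p x) (HAnd (Hd lp p) (HAnd (Tl lp l2) (HAnd (Call (RPrim f g) lp r)
               (HAnd (Hd lg p) (HAnd (Tl lg lg') (HAnd (Hd lg' r) (HAnd (Tl lg' l2)
                 (Call g lg y)))))))))))))))))
  | RMu f => HAnd (IsNat y) (HAnd
       (HEx2 (fun l' z0 => HAnd (Hd l' y) (HAnd (Tl l' l) (HAnd (Zero z0) (Call f l' z0)))))
       (HAll (fun m => HImp (Less m y) (HEx (fun lm => HEx (fun k => HEx (fun sk =>
          HAnd (Hd lm m) (HAnd (Tl lm l) (HAnd (Succ k sk) (Call f lm sk))))))))))
  end.

Definition CallAx (p : recf) : hform V :=
  HAll2 (fun l y => HImp (Call p l y) (Unfold p l y)).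

Definition Accepts (h : recf) (v : V) : hform V :=
  HEx (fun l => HEx (fun ln => HEx (fun o => HEx (fun z0 =>
    HAnd (Nil ln) (HAnd (Hd l v) (HAnd (Tl l ln)
      (HAnd (Zero z0) (HAnd (Succ z0 o) (Call h l o))))))))).

End Atoms.

Definition index_in (L : list recf) (p : recf) : nat :=
  epsilon (inhabits 0) (fun k => k < length L /\ nth k L RZero = p).

Lemma index_in_spec L p : In p L -> index_in L p < length L /\ nth (index_in L p) L RZero = p.
Proof.
  intro H. unfold index_in. apply epsilon_spec.
  apply (In_nth _ _ RZero) in H as [k [Hk E]]. now exists k.
Qed.

Definition AcceptRun {V : Type} (h : recf) (v s z : V) : hform V :=
  let L := subterms h in
  HExList (5 + length L) (fun labs => let lab k := nth k labs v in
    HAnd (BaseAxioms s z lab)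
      (HAnd (HAndList (map (CallAx s z lab (index_in L)) L))
            (Accepts s z lab (index_in L) h v))).

Definition TrivialOrAccepts {V : Type} (h : recf) (x : nat) : hform V :=
  HOr Trivial (HEx (fun v => HEx (fun s => HEx (fun z =>
    HAnd (Numeral x v s z) (AcceptRun h v s z))))).

Ltac in_ctx := cbn; repeat (first [left; reflexivity | right]); auto.
Ltac hequiv_auto :=
  unfold HAll2, HAll3, HEx2, HTrue, Succ, Zero, IsNat, Less, Hd, Tl, Nil, Call in *;
  repeat match goal with
         | |- hequiv _ _ _ => constructor
         | |- forall _, _ => intro
         | |- In _ _ => in_ctx
         end.

Section Hequiv.
Context {D : Type}.

Lemma hequiv_Trivial (ctx : list (nat * D)) : hequiv ctx Trivial Trivial.
Proof. unfold Trivial. hequiv_auto. Qed.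

Lemma hequiv_Numeral x : forall (ctx : list (nat * D)) v1 v2 s1 s2 z1 z2,
  In (v1, v2) ctx -> In (s1, s2) ctx -> In (z1, z2) ctx ->
  hequiv ctx (Numeral x v1 s1 z1) (Numeral x v2 s2 z2).
Proof. induction x; intros; cbn; hequiv_auto. apply IHx; in_ctx. Qed.

Section Labels.
Variables (ctx0 : list (nat * D)) (lab1 : nat -> nat) (lab2 : nat -> D) (ix : recf -> nat)
  (s1 z1 : nat) (s2 z2 : D).
Hypothesis Hlab : forall k, In (lab1 k, lab2 k) ctx0.
Hypothesis Hs : In (s1, s2) ctx0.
Hypothesis Hz : In (z1, z2) ctx0.

Lemma hequiv_BaseAxioms ctx :
  incl ctx0 ctx -> hequiv ctx (BaseAxioms s1 z1 lab1) (BaseAxioms s2 z2 lab2).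
Proof.
  intro I. pose proof (fun k => I _ (Hlab k)). pose proof (I _ Hs). pose proof (I _ Hz).
  unfold BaseAxioms. hequiv_auto.
Qed.

Lemma hequiv_NthIs i : forall ctx l1 l2 y1 y2,
  incl ctx0 ctx -> In (l1, l2) ctx -> In (y1, y2) ctx ->
  hequiv ctx (NthIs lab1 i l1 y1) (NthIs lab2 i l2 y2).
Proof.
  induction i; intros ctx l1 l2 y1 y2 I H1 H2; pose proof (fun k => I _ (Hlab k)); cbn; hequiv_auto.
  apply IHi; [apply incl_tl, I | in_ctx | in_ctx].
Qed.

Lemma hequiv_MapCall gs : forall ctx l1 l2 y1 y2,
  incl ctx0 ctx -> In (l1, l2) ctx -> In (y1, y2) ctx ->
  hequiv ctx (MapCall lab1 ix gs l1 y1) (MapCall lab2 ix gs l2 y2).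
Proof.
  induction gs; intros ctx l1 l2 y1 y2 I H1 H2; pose proof (fun k => I _ (Hlab k)); cbn;
    hequiv_auto.
  apply IHgs; [apply incl_tl, incl_tl, I | in_ctx | in_ctx].
Qed.

Lemma hequiv_CallAx ctx p :
  incl ctx0 ctx -> hequiv ctx (CallAx s1 z1 lab1 ix p) (CallAx s2 z2 lab2 ix p).
Proof.
  intro I. pose proof (fun k => I _ (Hlab k)). pose proof (I _ Hs). pose proof (I _ Hz).
  unfold CallAx. destruct p; unfold Unfold; hequiv_auto.
  - apply hequiv_NthIs; [apply incl_tl, incl_tl, I | in_ctx | in_ctx].
  - apply hequiv_MapCall; [apply incl_tl, incl_tl, incl_tl, I | in_ctx | in_ctx].
Qed.

Lemma hequiv_CallAxs ctx L : incl ctx0 ctx ->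
  hequiv ctx (HAndList (map (CallAx s1 z1 lab1 ix) L)) (HAndList (map (CallAx s2 z2 lab2 ix) L)).
Proof.
  intro I. induction L; cbn; [unfold HTrue; hequiv_auto |].
  constructor; [apply hequiv_CallAx, I | exact IHL].
Qed.

Lemma hequiv_Accepts ctx h v1 v2 : incl ctx0 ctx -> In (v1, v2) ctx ->
  hequiv ctx (Accepts s1 z1 lab1 ix h v1) (Accepts s2 z2 lab2 ix h v2).
Proof.
  intros I Hv. pose proof (fun k => I _ (Hlab k)). pose proof (I _ Hs). pose proof (I _ Hz).
  unfold Accepts. hequiv_auto.
Qed.

End Labels.

Lemma hequiv_HExList n : forall (ctx : list (nat * D)) B1 B2,
  (forall ctx' xs1 xs2, incl ctx ctx' -> Forall2 (fun a b => In (a, b) ctx') xs1 xs2 ->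
     hequiv ctx' (B1 xs1) (B2 xs2)) ->
  hequiv ctx (HExList n B1) (HExList n B2).
Proof.
  induction n; intros ctx B1 B2 H; cbn.
  - apply H; [apply incl_refl | constructor].
  - constructor. intro x. apply IHn. intros ctx' xs1 xs2 I F. apply H.
    + intros e He. apply I. now right.
    + constructor; [apply I; now left | exact F].
Qed.

Lemma hequiv_AcceptRun (ctx : list (nat * D)) h v1 v2 s1 s2 z1 z2 :
  In (v1, v2) ctx -> In (s1, s2) ctx -> In (z1, z2) ctx ->
  hequiv ctx (AcceptRun h v1 s1 z1) (AcceptRun h v2 s2 z2).
Proof.
  intros Hv Hs Hz. apply hequiv_HExList. intros ctx' xs1 xs2 I F.
  assert (Hlab : forall k, In (nth k xs1 v1, nth k xs2 v2) ctx').
  { intro k. revert k. induction F as [| a b xs1 xs2 Hab F IHF]; intros [| k]; cbn; auto. }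
  constructor; [| constructor].
  - apply (hequiv_BaseAxioms ctx'); auto using incl_refl.
  - apply (hequiv_CallAxs ctx'); auto using incl_refl.
  - apply (hequiv_Accepts ctx'); auto using incl_refl.
Qed.

Lemma hequiv_TrivialOrAccepts h x : hequiv [] (TrivialOrAccepts h x) (@TrivialOrAccepts D h x).
Proof.
  constructor; [apply hequiv_Trivial |].
  repeat (constructor; intro). constructor.
  - apply hequiv_Numeral; in_ctx.
  - apply hequiv_AcceptRun; in_ctx.
Qed.

End Hequiv.

(** * Soundness *)

Section Soundness.
Context {D : Type} (R : D -> D -> Prop) (s z : D) (lab : nat -> D) (ix : recf -> nat)
  (L : list recf).
Hypothesis Hbase : hsem R (BaseAxioms s z lab).
Hypothesis Hcall : forall p, In p L -> hsem R (CallAx s z lab ix p).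
Hypothesis HL : subterm_closed L.

Fixpoint is_num (n : nat) (e : D) : Prop :=
  match n with
  | 0 => lab_edge R z e e
  | S n => exists p, is_num n p /\ lab_edge R s p e
  end.

Fixpoint represents (l : D) (v : list nat) : Prop :=
  match v with
  | [] => lab_edge R (lab 4) l l
  | x :: v => exists e, is_num x e /\ lab_edge R (lab 2) l e /\
                exists l', lab_edge R (lab 3) l l' /\ represents l' v
  end.

Ltac base_axioms :=
  pose proof Hbase as Hb; unfold BaseAxioms, HAll2, HAll3 in Hb; cbn in Hb;
  destruct Hb as (zero_exists & zero_unique & zero_is_nat & succ_exists & succ_is_nat &
    succ_functional & succ_injective & succ_not_zero & less_trichotomy & not_less_zero &
    less_succ & hd_functional & tl_functional).

Lemma is_num_is_nat n a : is_num n a -> lab_edge R (lab 0) a a.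
Proof.
  base_axioms. revert a; induction n as [| n IH]; cbn; intros a Ha.
  - exact (zero_is_nat a Ha).
  - destruct Ha as [p [Hp Hpa]]. exact (succ_is_nat p a Hpa).
Qed.

Lemma is_num_exists n : exists a, is_num n a.
Proof.
  base_axioms. induction n as [| n [a Ha]]; cbn; [exact zero_exists |].
  destruct (succ_exists a (is_num_is_nat n a Ha)) as [b Hb]. eauto.
Qed.

Lemma is_num_succ_not_zero n a : is_num (S n) a -> ~ is_num 0 a.
Proof. base_axioms. intros [p [_ Hp]] Hz. exact (succ_not_zero p a Hp Hz). Qed.

Lemma is_num_less n x a : is_num n a -> lab_edge R (lab 1) x a -> exists m, m < n /\ is_num m x.
Proof.
  base_axioms. revert a; induction n as [| n IH]; cbn; intros a Ha Hx.
  - destruct (not_less_zero x a Ha Hx).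
  - destruct Ha as [p [Hp Hpa]]. destruct (less_succ x p a Hpa Hx) as [H | <-].
    + destruct (IH p Hp H) as [m [Hm Hmx]]. exists m. split; [lia | exact Hmx].
    + exists n. auto.
Qed.

Lemma represents_nth i v l y : represents l v -> i < length v ->
  hsem R (NthIs lab i l y) -> is_num (nth i v 0) y.
Proof.
  base_axioms. revert v l; induction i as [| i IH]; intros [| x v] l Hr Hi Hn; cbn in *; try lia.
  - destruct Hr as [e [He [Hle _]]]. now rewrite (hd_functional l y e Hn Hle).
  - destruct Hr as [e [_ [_ [l2 [Hl2 Hr]]]]], Hn as [l' [Hl' Hn]].
    rewrite (tl_functional l l' l2 Hl' Hl2) in Hn. apply (IH v l2); [exact Hr | lia | exact Hn].
Qed.

Lemma unfold_call p l y : In p L -> lab_edge R (lab (5 + ix p)) l y ->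
  hsem R (Unfold s z lab ix p l y).
Proof. intros Hp Hc. exact (Hcall p Hp l y Hc). Qed.

Definition call_sound (p : recf) (v : list nat) (y : nat) : Prop :=
  In p L -> forall l y', represents l v -> lab_edge R (lab (5 + ix p)) l y' -> is_num y y'.

Definition map_call_sound (gs : list recf) (v ws : list nat) : Prop :=
  (forall g, In g gs -> In g L) ->
  forall l l0, represents l v -> hsem R (MapCall lab ix gs l l0) -> represents l0 ws.

Lemma call_sound_zero v : call_sound RZero v 0.
Proof. intros Hin l y' _ Hc. exact (unfold_call _ _ _ Hin Hc). Qed.

Lemma call_sound_succ x v : call_sound RSucc (x :: v) (S x).
Proof.
  base_axioms. intros Hin l y' Hr Hc.
  pose proof (unfold_call _ _ _ Hin Hc) as U; cbn in U.
  destruct U as [x' [Hx' Hs]], Hr as [e [He [Hle _]]].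
  rewrite (hd_functional l x' e Hx' Hle) in Hs. cbn. eauto.
Qed.

Lemma call_sound_proj i v : i < length v -> call_sound (RProj i) v (nth i v 0).
Proof.
  intros Hi Hin l y' Hr Hc. exact (represents_nth i v l y' Hr Hi (unfold_call _ _ _ Hin Hc)).
Qed.

Lemma call_sound_comp f gs v ws y :
  map_call_sound gs v ws -> call_sound f ws y -> call_sound (RComp f gs) v y.
Proof.
  intros IHgs IHf Hin l y' Hr Hc.
  pose proof (unfold_call _ _ _ Hin Hc) as U; cbn in U.
  destruct U as [l0 [Hl0 Hcf]].
  destruct (proj1 HL f gs Hin) as [Hf Hgs].
  exact (IHf Hf l0 y' (IHgs Hgs l l0 Hr Hl0) Hcf).
Qed.

Lemma call_sound_prim0 f g v y : call_sound f v y -> call_sound (RPrim f g) (0 :: v) y.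
Proof.
  base_axioms. intros IHf Hin l y' Hr Hc.
  pose proof (unfold_call _ _ _ Hin Hc) as U; cbn in U.
  destruct U as [x [l2 [Hx [Hl2 Hcases]]]].
  destruct Hr as [e [He [Hle [l2' [Hl2' Hr]]]]].
  rewrite (hd_functional l x e Hx Hle), (tl_functional l l2 l2' Hl2 Hl2') in Hcases.
  destruct Hcases as [[_ Hcf] | [p [r [lp [lg [lg' [Hp _]]]]]]].
  - exact (IHf (proj1 (proj1 (proj2 HL) f g Hin)) l2' y' Hr Hcf).
  - destruct (succ_not_zero p e Hp He).
Qed.

Lemma call_sound_primS f g n v r y :
  call_sound (RPrim f g) (n :: v) r -> call_sound g (n :: r :: v) y ->
  call_sound (RPrim f g) (S n :: v) y.
Proof.
  base_axioms. intros IHrec IHg Hin l y' Hr Hc.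
  pose proof (unfold_call _ _ _ Hin Hc) as U; cbn in U.
  destruct U as [x [l2 [Hx [Hl2 Hcases]]]].
  destruct Hr as [e [[p0 [Hp0 Hp0e]] [Hle [l2' [Hl2' Hr]]]]].
  rewrite (hd_functional l x e Hx Hle), (tl_functional l l2 l2' Hl2 Hl2') in Hcases.
  destruct Hcases as [[Hz _] | [p [r' [lp [lg [lg' Hstep]]]]]];
    [destruct (succ_not_zero p0 e Hp0e Hz) |].
  destruct Hstep as (Hp & Hlp1 & Hlp2 & Hcr & Hlg1 & Hlg2 & Hlg3 & Hlg4 & Hcg).
  rewrite (succ_injective p p0 e Hp Hp0e) in *.
  assert (Hrr : is_num r r').
  { apply (IHrec Hin lp r'); [| exact Hcr]. exists p0. eauto 6. }
  apply (IHg (proj2 (proj1 (proj2 HL) f g Hin)) lg y'); [| exact Hcg].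
  exists p0. split; [exact Hp0 |]. split; [exact Hlg1 |]. exists lg'. split; [exact Hlg2 |].
  exists r'. eauto 6.
Qed.

Lemma call_sound_mu f v n :
  call_sound f (n :: v) 0 -> (forall m, m < n -> exists k, call_sound f (m :: v) (S k)) ->
  call_sound (RMu f) v n.
Proof.
  base_axioms. intros IHn IHlt Hin l y' Hr Hc.
  pose proof (unfold_call _ _ _ Hin Hc) as U; cbn in U.
  destruct U as [Hnat [[l' [z0 (Hl'1 & Hl'2 & Hz0 & Hcz)]] Hbelow]].
  pose proof (proj2 (proj2 HL) f Hin) as Hf.
  destruct (is_num_exists n) as [en Hen].
  destruct (less_trichotomy en y' (is_num_is_nat n en Hen) Hnat) as [Hlt | [<- | Hgt]].
  - destruct (Hbelow en Hlt) as [lm [k [sk (Hm1 & Hm2 & Hks & Hcl)]]].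
    assert (Hsk : is_num 0 sk) by (apply (IHn Hf lm sk); [exists en; eauto | exact Hcl]).
    destruct (succ_not_zero k sk Hks Hsk).
  - exact Hen.
  - destruct (is_num_less n y' en Hen Hgt) as [m [Hm Hmy]].
    destruct (IHlt m Hm) as [k IHk].
    assert (Hz0' : is_num (S k) z0) by (apply (IHk Hf l' z0); [exists y'; eauto | exact Hcz]).
    destruct (is_num_succ_not_zero k z0 Hz0' Hz0).
Qed.

Lemma map_call_sound_nil v : map_call_sound [] v [].
Proof. intros _ l l0 _ Hl0. exact Hl0. Qed.

Lemma map_call_sound_cons g gs v w ws :
  call_sound g v w -> map_call_sound gs v ws -> map_call_sound (g :: gs) v (w :: ws).
Proof.
  intros IHg IHgs Hin l l0 Hr [w' (Hw1 & Hw2 & l1 & Hl1 & Hl)].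
  exists w'. split; [exact (IHg (Hin g (or_introl eq_refl)) l w' Hr Hw2) |].
  split; [exact Hw1 |]. exists l1. split; [exact Hl1 |].
  exact (IHgs (fun g' H => Hin g' (or_intror H)) l l1 Hr Hl).
Qed.

Lemma call_sound_of_eval p v y : eval p v y -> call_sound p v y.
Proof.
  apply (eval_nested_ind call_sound map_call_sound).
  - exact call_sound_zero.
  - exact call_sound_succ.
  - exact call_sound_proj.
  - intros f gs v' ws y' _ IHgs _ IHf. exact (call_sound_comp f gs v' ws y' IHgs IHf).
  - intros f g v' y' _ IHf. exact (call_sound_prim0 f g v' y' IHf).
  - intros f g n v' r y' _ IHrec _ IHg. exact (call_sound_primS f g n v' r y' IHrec IHg).
  - intros f v' n _ IHn IHlt. apply (call_sound_mu f v' n IHn).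
    intros m Hm. destruct (IHlt m Hm) as [k [_ IHk]]. eauto.
  - exact map_call_sound_nil.
  - intros g gs v' w ws _ IHg _ IHgs. exact (map_call_sound_cons g gs v' w ws IHg IHgs).
Qed.

End Soundness.

(** * The standard model of a computation *)

Inductive val : Type := VNat (n : nat) | VList (v : list nat).
Inductive vertex : Type := Point (u : val) | Mid (k : nat) (a b : val) | Label (k : nat).

Section StandardModel.
Variable L : list recf.

(* Label [0] is the successor, [1] zero, and [2 + k] stands for [lab k]. *)
Definition std_lab (j : nat) (a b : val) : Prop :=
  match j, a, b with
  | 0, VNat n, VNat m => m = S n
  | 1, VNat n, VNat m => n = 0 /\ m = 0
  | 2, VNat n, VNat m => n = m
  | 3, VNat n, VNat m => n < m
  | 4, VList (x :: _), VNat y => y = x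
  | 5, VList (_ :: v), VList w => w = v
  | 6, VList [], VList [] => True
  | S (S (S (S (S (S (S k)))))), VList v, VNat y => eval (nth k L RZero) v y
  | _, _, _ => False
  end.

(* [std_lab j a b] is drawn as the path [Point a ~ Mid j a b ~ Point b] together
   with [Mid j a b ~ Label j]; only the label vertices carry loops. *)
Definition std_rel (x y : vertex) : Prop :=
  match x, y with
  | Point a, Mid k a' b => a = a' /\ std_lab k a b
  | Mid k a b, Point b' => b = b' /\ std_lab k a b
  | Mid k _ _, Label k' => k = k'
  | Label k, Label k' => k = k'
  | _, _ => False
  end.

Lemma std_lab_edge_iff j x y :
  lab_edge std_rel (Label j) x y <-> exists a b, x = Point a /\ y = Point b /\ std_lab j a b.
Proof.
  split.
  - intros [t (H1 & H2 & H3 & H4)].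
    destruct x, t, y; cbn in *; try tauto; try (subst; tauto).
    destruct H1 as [-> Hr], H2 as [-> _]. subst. eauto.
  - intros [a [b (-> & -> & H)]]. exists (Mid j a b). cbn. tauto.
Qed.

Lemma std_lab_edge j a b : std_lab j a b -> lab_edge std_rel (Label j) (Point a) (Point b).
Proof. intro H. apply std_lab_edge_iff. eauto. Qed.

Ltac invert_std :=
  repeat match goal with
    | H : lab_edge std_rel (Label _) _ _ |- _ =>
        apply std_lab_edge_iff in H; destruct H as (? & ? & ? & ? & ?); subst
    | H : Point _ = Point _ |- _ => injection H as H; subst
    | H : VNat _ = VNat _ |- _ => injection H as H; subst
    | H : VList _ = VList _ |- _ => injection H as H; subst
    end;
  repeat match goal with
    | u : val |- _ => destruct u
    | H : std_lab _ (VList ?l) _ |- _ => is_var l; destruct l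
    | H : std_lab _ _ (VList ?l) |- _ => is_var l; destruct l
    end;
  cbn in *; try tauto;
  repeat match goal with H : _ /\ _ |- _ => destruct H end; subst.

Variable lab : nat -> vertex.
Hypothesis Hlab : forall k, k < 5 + length L -> lab k = Label (2 + k).
Variable ix : recf -> nat.
Hypothesis Hix : forall p, In p L -> ix p < length L /\ nth (ix p) L RZero = p.
Hypothesis HL : subterm_closed L.

Lemma lab_small k : k < 5 -> lab k = Label (2 + k).
Proof. intro; apply Hlab; lia. Qed.

Lemma std_succ n : lab_edge std_rel (Label 0) (Point (VNat n)) (Point (VNat (S n))).
Proof. now apply std_lab_edge. Qed.
Lemma std_zero : lab_edge std_rel (Label 1) (Point (VNat 0)) (Point (VNat 0)).
Proof. now apply std_lab_edge. Qed.
Lemma std_is_nat n : lab_edge std_rel (lab 0) (Point (VNat n)) (Point (VNat n)).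
Proof. rewrite lab_small by lia. now apply std_lab_edge. Qed.
Lemma std_hd x v : lab_edge std_rel (lab 2) (Point (VList (x :: v))) (Point (VNat x)).
Proof. rewrite lab_small by lia. now apply std_lab_edge. Qed.
Lemma std_tl x v : lab_edge std_rel (lab 3) (Point (VList (x :: v))) (Point (VList v)).
Proof. rewrite lab_small by lia. now apply std_lab_edge. Qed.
Lemma std_nil : lab_edge std_rel (lab 4) (Point (VList [])) (Point (VList [])).
Proof. rewrite lab_small by lia. now apply std_lab_edge. Qed.

Lemma std_call q v y : In q L -> eval q v y ->
  lab_edge std_rel (lab (5 + ix q)) (Point (VList v)) (Point (VNat y)).
Proof.
  intros Hq He. destruct (Hix q Hq) as [Hlt E]. rewrite Hlab by lia.
  apply std_lab_edge. cbn. now rewrite E.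
Qed.

Lemma std_less_inv x n : lab_edge std_rel (lab 1) x (Point (VNat n)) ->
  exists m, x = Point (VNat m) /\ m < n.
Proof. intro H. rewrite lab_small in H by lia. invert_std. eauto. Qed.

Lemma std_call_inv q l y : In q L -> lab_edge std_rel (lab (5 + ix q)) l y ->
  exists v w, l = Point (VList v) /\ y = Point (VNat w) /\ eval q v w.
Proof.
  intros Hq H. destruct (Hix q Hq) as [Hlt E]. rewrite Hlab in H by lia.
  apply std_lab_edge_iff in H as [[n | v] [[w | w] (-> & -> & H)]]; cbn in H; try tauto.
  rewrite E in H. eauto.
Qed.

Lemma std_BaseAxioms : hsem std_rel (BaseAxioms (Label 0) (Label 1) lab).
Proof.
  unfold BaseAxioms, HAll2, HAll3. cbn. rewrite !lab_small by lia.
  repeat split; intros; invert_std;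
    try solve [reflexivity | lia | congruence | apply std_lab_edge; cbn; auto; lia].
  - exists (Point (VNat 0)). now apply std_lab_edge.
  - exists (Point (VNat (S n))). now apply std_lab_edge.
  - destruct (lt_eq_lt_dec n0 n) as [[H | <-] | H].
    + left. now apply std_lab_edge.
    + right; left. reflexivity.
    + right; right. now apply std_lab_edge.
  - match goal with H : _ < S _ |- _ => inversion H; subst end.
    + right. reflexivity.
    + left. apply std_lab_edge. cbn. lia.
Qed.

Lemma std_NthIs i v : i < length v ->
  hsem std_rel (NthIs lab i (Point (VList v)) (Point (VNat (nth i v 0)))).
Proof.
  revert v; induction i as [| i IH]; intros [| x v] Hi; cbn in *; try lia.
  - apply std_hd.
  - exists (Point (VList v)). split; [apply std_tl | apply IH; lia].
Qed.

Lemma std_MapCall gs v ws : evals gs v ws -> (forall g, In g gs -> In g L) ->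
  hsem std_rel (MapCall lab ix gs (Point (VList v)) (Point (VList ws))).
Proof.
  induction 1 as [v | g gs v w ws Hg _ IH]; intros Hin; cbn; [apply std_nil |].
  exists (Point (VNat w)). split; [apply std_hd |].
  split; [apply std_call; [apply Hin; now left | exact Hg] |].
  exists (Point (VList ws)). split; [apply std_tl | apply IH; intros; apply Hin; now right].
Qed.

Lemma std_CallAx p : In p L -> hsem std_rel (CallAx (Label 0) (Label 1) lab ix p).
Proof.
  intros Hp l y H. destruct (std_call_inv p l y Hp H) as [v [w (-> & -> & Hev)]].
  destruct HL as (Hcomp & Hprim & Hmu).
  destruct p; cbn; inversion Hev; subst.
  - apply std_zero.
  - exists (Point (VNat x)). split; [apply std_hd | apply std_succ].
  - now apply std_NthIs.
  - destruct (Hcomp _ _ Hp). exists (Point (VList ws)).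
    split; [now apply std_MapCall | now apply std_call].
  - destruct (Hprim _ _ Hp). exists (Point (VNat 0)), (Point (VList v0)).
    split; [apply std_hd | split; [apply std_tl |]].
    left. split; [apply std_zero | now apply std_call].
  - destruct (Hprim _ _ Hp). exists (Point (VNat (S n))), (Point (VList v0)).
    split; [apply std_hd | split; [apply std_tl |]].
    right. exists (Point (VNat n)), (Point (VNat r)), (Point (VList (n :: v0))),
      (Point (VList (n :: r :: v0))), (Point (VList (r :: v0))).
    repeat split; first [apply std_succ | apply std_hd | apply std_tl | now apply std_call].
  - specialize (Hmu _ Hp). split; [apply std_is_nat | split].
    + exists (Point (VList (w :: v))), (Point (VNat 0)).
      repeat split; first [apply std_zero | apply std_hd | apply std_tl | now apply std_call].
    + intros m Hm. destruct (std_less_inv m w Hm) as [m' [-> Hm']].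
      match goal with H : forall m, m < w -> _ |- _ => destruct (H m' Hm') as [k Hk] end.
      exists (Point (VList (m' :: v))), (Point (VNat k)), (Point (VNat (S k))).
      repeat split; first [apply std_succ | apply std_hd | apply std_tl | now apply std_call].
Qed.

End StandardModel.

Lemma hsem_HExList {D : Type} (R : D -> D -> Prop) n B :
  hsem R (HExList n B) <-> exists xs, length xs = n /\ hsem R (B xs).
Proof.
  revert B; induction n as [| n IH]; intro B; cbn.
  - split; [now exists [] | intros [[| x xs] [E H]]; [exact H | discriminate]].
  - split.
    + intros [x Hx]. apply IH in Hx as [xs [E H]]. exists (x :: xs). cbn. auto.
    + intros [[| x xs] [E H]]; [discriminate |]. exists x. apply IH. eauto.
Qed.

Lemma hsem_HAndList {D : Type} (R : D -> D -> Prop) ps :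
  hsem R (HAndList ps) <-> forall p, In p ps -> hsem R p.
Proof.
  induction ps as [| p ps IH]; cbn; [split; [contradiction | auto] |].
  rewrite IH. split; [intros [H1 H2] q [<- | Hq]; auto | auto].
Qed.

Definition std_structure (L : list recf) : structure :=
  Structure vertex (std_rel L) (inhabits (Label 0)).

Lemma std_Numeral L x : hsem (std_rel L) (Numeral x (Point (VNat x)) (Label 0) (Label 1)).
Proof.
  induction x as [| x IH]; cbn; [now apply std_lab_edge |].
  exists (Point (VNat x)). split; [now apply std_lab_edge | intros s' z' -> ->; exact IH].
Qed.

Lemma std_AcceptRun h c : eval h [c] 1 ->
  hsem (std_rel (subterms h)) (AcceptRun h (Point (VNat c)) (Label 0) (Label 1)).
Proof.
  intro Hev. set (L := subterms h). apply hsem_HExList.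
  set (labs := map (fun k => Label (2 + k)) (seq 0 (5 + length L))).
  exists labs. split; [unfold labs; now rewrite length_map, length_seq |].
  set (lab k := nth k labs (Point (VNat c))).
  assert (Hlab : forall k, k < 5 + length L -> lab k = Label (2 + k)).
  { intros k Hk. unfold lab, labs.
    rewrite nth_indep with (d' := Label (2 + 0)) by (rewrite length_map, length_seq; lia).
    rewrite (map_nth (fun k => Label (2 + k))), seq_nth by lia. reflexivity. }
  pose proof (index_in_spec L) as Hix.
  pose proof (subterm_closed_subterms h) as HL.
  cbn. split; [| split].
  - exact (std_BaseAxioms L lab Hlab).
  - apply hsem_HAndList. intros p Hp. apply in_map_iff in Hp as [q [<- Hq]].
    exact (std_CallAx L lab Hlab _ Hix HL q Hq).
  - exists (Point (VList [c])), (Point (VList [])), (Point (VNat 1)), (Point (VNat 0)).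
    repeat split.
    + exact (std_nil L lab Hlab).
    + exact (std_hd L lab Hlab c []).
    + exact (std_tl L lab Hlab c []).
    + now apply std_lab_edge.
    + now apply std_lab_edge.
    + exact (std_call L lab Hlab _ Hix h [c] 1 (in_subterms_self h) Hev).
Qed.

Lemma is_num_of_Numeral {D : Type} (R : D -> D -> Prop) x v s z :
  hsem R (Numeral x v s z) -> is_num R s z x v.
Proof.
  revert v s z; induction x as [| x IH]; cbn; intros v s z H; [exact H |].
  destruct H as [w [Hw Hx]]. exists w. split; [apply IH, (Hx s z eq_refl eq_refl) | exact Hw].
Qed.

Lemma AcceptRun_sound {D : Type} (R : D -> D -> Prop) h c v s z :
  eval h [c] 0 -> is_num R s z c v -> ~ hsem R (AcceptRun h v s z).
Proof.
  intros Hev Hv Hrun. apply hsem_HExList in Hrun as [labs [_ Hrun]].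
  set (lab k := nth k labs v) in Hrun. set (L := subterms h) in Hrun.
  destruct Hrun as (Hbase & Hcalls & l & ln & o & z0 & Hnil & Hhd & Htl & Hz0 & Hs & Hc).
  assert (Hcall : forall p, In p L -> hsem R (CallAx s z lab (index_in L) p)).
  { intros p Hp. apply (proj1 (hsem_HAndList _ _) Hcalls). now apply in_map. }
  assert (Hl : represents R s z lab l [c]).
  { exists v. split; [exact Hv |]. split; [exact Hhd |].
    exists ln. split; [exact Htl | exact Hnil]. }
  assert (Ho : is_num R s z 0 o).
  { exact (call_sound_of_eval R s z lab (index_in L) L Hbase Hcall (subterm_closed_subterms h)
      h [c] 0 Hev (in_subterms_self h) l o Hl Hc). }
  exact (is_num_succ_not_zero R s z lab Hbase 0 o (ex_intro _ z0 (conj Hz0 Hs)) Ho).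
Qed.

Lemma TrivialOrAccepts_rejected {D : Type} (R : D -> D -> Prop) h c :
  eval h [c] 0 -> hsem R (TrivialOrAccepts h c) -> hsem R Trivial.
Proof.
  intros Hev [H | (v & s & z & Hv & Hrun)]; [exact H |].
  destruct (AcceptRun_sound R h c v s z Hev (is_num_of_Numeral R c v s z Hv) Hrun).
Qed.

Lemma std_TrivialOrAccepts h c : eval h [c] 1 ->
  hsem (std_rel (subterms h)) (TrivialOrAccepts h c).
Proof.
  intro Hev. right. exists (Point (VNat c)), (Label 0), (Label 1).
  split; [apply std_Numeral | now apply std_AcceptRun].
Qed.

(** * Computing codes *)

Ltac congruence_up_to_arith :=
  match goal with
  | |- ?x = ?x => reflexivity
  | |- Rel _ _ = Rel _ _ => f_equal; lia
  | |- Eq _ _ = Eq _ _ => f_equal; lia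
  | |- _ => f_equal; congruence_up_to_arith
  end.

Lemma compile_Numeral_shift x d :
  compile (S (S (S d))) (Numeral x d (S d) (S (S d))) = compile 3 (Numeral x 0 1 2).
Proof.
  revert d; induction x as [| x IH]; intro d; cbn [Numeral compile HAll2].
  - congruence_up_to_arith.
  - rewrite IH, (IH 3). congruence_up_to_arith.
Qed.

Definition ncode (x : nat) : nat := code (compile 3 (@Numeral nat x 0 1 2)).

Definition code_succ_edge : nat := code (compile 4 (@HLab nat 1 3 0)).
Definition code_eq_s : nat := code (Eq 1 4).
Definition code_eq_z : nat := code (Eq 0 3).

Definition nstep (n : nat) : nat :=
  cex (cand code_succ_edge (call (call (cimp code_eq_s (cimp code_eq_z n))))).

Lemma ncode_S x : ncode (S x) = nstep (ncode x).
Proof.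
  unfold ncode. rewrite <- (compile_Numeral_shift x 3).
  change (compile 3 (Numeral (S x) 0 1 2)) with
    (Ex (And (compile 4 (@HLab nat 1 3 0))
       (All (All (Imp (Eq 1 4) (Imp (Eq 0 3) (compile 6 (Numeral x 3 4 5)))))))).
  rewrite code_Ex, code_And, !code_All, !code_Imp.
  unfold nstep, code_succ_edge, code_eq_s, code_eq_z. reflexivity.
Qed.

Definition estep (a : aexp) : aexp :=
  eex (eand (AConst code_succ_edge)
         (eall (eall (eimp (AConst code_eq_s) (eimp (AConst code_eq_z) a))))).

Lemma aeval_estep v a : aeval v (estep a) = nstep (aeval v a).
Proof.
  unfold estep, nstep. rewrite aeval_eex, aeval_eand, !aeval_eall, !aeval_eimp.
  cbn [aeval]. reflexivity.
Qed.

Definition rncode : recf := RPrim (rconst (ncode 0)) (acompile (estep (AVar 1))).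

Lemma eval_rncode x v : eval rncode (x :: v) (ncode x).
Proof.
  induction x as [| x IH]; [constructor; apply eval_rconst |].
  eapply ev_primS; [exact IH |].
  replace (ncode (S x)) with (aeval (x :: ncode x :: v) (estep (AVar 1))).
  - apply eval_acompile. cbn. repeat split; lia.
  - rewrite aeval_estep. cbn [aeval nth]. symmetry. apply ncode_S.
Qed.

Definition code_trivial : nat := code (compile 0 (@Trivial nat)).

Definition tcode (n c : nat) : nat := cor code_trivial (cex (cex (cex (cand n c)))).

Lemma code_TrivialOrAccepts h x :
  code (compile 0 (TrivialOrAccepts h x)) = tcode (ncode x) (code (compile 3 (AcceptRun h 0 1 2))).
Proof.
  change (compile 0 (TrivialOrAccepts h x)) with
    (Or (compile 0 (@Trivial nat))
       (Ex (Ex (Ex (And (compile 3 (Numeral x 0 1 2)) (compile 3 (AcceptRun h 0 1 2))))))).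
  rewrite code_Or, !code_Ex, code_And. unfold tcode, code_trivial, ncode. reflexivity.
Qed.

Definition rtcode : recf :=
  acompile (eor (AConst code_trivial) (eex (eex (eex (eand (AVar 0) (AVar 1)))))).

(* [tcode (ncode c) c] is the code of [TrivialOrAccepts h c] for every [h] whose
   [AcceptRun] part has code [c] (see [code_TrivialOrAccepts]); choosing for [c] that
   code for [h := diag f] itself closes the loop. *)
Definition diag (f : recf) : recf := RComp f [RComp rtcode [RComp rncode [RProj 0]; RProj 0]].

Lemma eval_diag f c y : eval f [tcode (ncode c) c] y -> eval (diag f) [c] y.
Proof.
  assert (Hc : eval (RProj 0) [c] c) by (apply (ev_proj 0 [c]); cbn; lia).
  intro H. apply (ev_comp _ _ _ [tcode (ncode c) c]); [| exact H].
  constructor; [| constructor].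
  apply (ev_comp _ _ _ [ncode c; c]).
  - constructor; [| constructor; [exact Hc | constructor]].
    apply (ev_comp _ _ _ [c]); [| apply eval_rncode].
    constructor; [exact Hc | constructor].
  - replace (tcode (ncode c) c)
      with (aeval [ncode c; c]
              (eor (AConst code_trivial) (eex (eex (eex (eand (AVar 0) (AVar 1))))))).
    + apply eval_acompile. cbn. repeat split; lia.
    + rewrite aeval_eor, !aeval_eex, aeval_eand. cbn [aeval nth]. unfold tcode. reflexivity.
Qed.

Lemma isomorphic_sym M N : isomorphic M N -> isomorphic N M.
Proof.
  intros (f & g & Hgf & Hfg & Hrel). exists g, f. split; [exact Hfg | split; [exact Hgf |]].
  intros x y. rewrite Hrel, !Hfg. reflexivity.
Qed.

Lemma isomorphic_trans M N P : isomorphic M N -> isomorphic N P -> isomorphic M P.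
Proof.
  intros (f & g & Hgf & Hfg & Hf) (f' & g' & Hgf' & Hfg' & Hf').
  exists (fun x => f' (f x)), (fun y => g (g' y)). split; [| split].
  - intro x. now rewrite Hgf', Hgf.
  - intro y. now rewrite Hfg, Hfg'.
  - intros x y. now rewrite Hf, Hf'.
Qed.

Lemma defining_of_unique_model A G :
  sentence A -> is_graph G -> models G A -> (forall M, models M A -> isomorphic M G) ->
  defining A.
Proof.
  intros HA HG HGA Huniq. split; [exact HA |].
  exists G. split; [exact HG | split; [exact HGA |]].
  intros M Hiso HM. exact (Hiso (Huniq M HM)).
Qed.

Lemma not_defining_of_models A M N :
  models M A -> models N A -> ~ isomorphic M N -> ~ defining A.
Proof.
  intros HM HN Hiso (_ & G & _ & _ & Huniq).
  assert (HMG : isomorphic M G) by (apply NNPP; intro H; exact (Huniq M H HM)).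
  assert (HNG : isomorphic N G) by (apply NNPP; intro H; exact (Huniq N H HN)).
  exact (Hiso (isomorphic_trans _ _ _ HMG (isomorphic_sym _ _ HNG))).
Qed.

Definition K1 : structure := Structure unit (fun _ _ => False) (inhabits tt).

Lemma K1_is_graph : is_graph K1.
Proof. split; cbn; tauto. Qed.

Lemma hsem_Trivial_K1 : hsem (rel K1) Trivial.
Proof. cbn. split; [intros [] []; reflexivity | auto]. Qed.

Lemma isomorphic_K1_of_Trivial M : hsem (rel M) Trivial -> isomorphic M K1.
Proof.
  intros [Hpoint Hloop]. destruct (dom_inhabited M) as [d0].
  exists (fun _ => tt), (fun _ => d0). cbn. split; [| split].
  - intro x. apply Hpoint.
  - intros []. reflexivity.
  - intros x y. split; [| intros []]. intro Hxy. rewrite (Hpoint x y) in Hxy. exact (Hloop y Hxy).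
Qed.

Lemma std_not_isomorphic_K1 L : ~ isomorphic (std_structure L) K1.
Proof.
  intros (f & g & Hgf & _ & _).
  assert (E : @eq (dom (std_structure L)) (Label 0) (Label 1)).
  { rewrite <- (Hgf (Label 0)), <- (Hgf (Label 1)). now destruct (f (Label 0)), (f (Label 1)). }
  discriminate E.
Qed.

Lemma diagonal_sentence f : exists A : form,
  sentence A /\ models K1 A /\
  (eval f [code A] 1 -> exists M, models M A /\ ~ isomorphic M K1) /\
  (eval f [code A] 0 -> forall M, models M A -> isomorphic M K1).
Proof.
  set (h := diag f). set (c := code (compile 3 (@AcceptRun nat h 0 1 2))).
  exists (compile 0 (TrivialOrAccepts h c)).
  assert (Hdiag : forall y, eval f [code (compile 0 (TrivialOrAccepts h c))] y -> eval h [c] y).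
  { intros y Hy. apply eval_diag. now rewrite code_TrivialOrAccepts in Hy. }
  pose proof (fun M => models_compile M _ _ (hequiv_TrivialOrAccepts h c)) as Hmodels.
  split; [| split; [| split]].
  - exact (sentence_compile tt _ _ (hequiv_TrivialOrAccepts h c)).
  - apply Hmodels. left. exact hsem_Trivial_K1.
  - intro H1. exists (std_structure (subterms h)). split; [| apply std_not_isomorphic_K1].
    apply Hmodels, std_TrivialOrAccepts, Hdiag, H1.
  - intros H0 M HM. apply isomorphic_K1_of_Trivial.
    exact (TrivialOrAccepts_rejected (rel M) h c (Hdiag 0 H0) (proj1 (Hmodels M) HM)).
Qed.

Theorem theorem5p3 :
  ~ decidable_set (fun n : nat => exists A : form, code A = n /\ defining A).
Proof.
  intros [f Hf].
  destruct (diagonal_sentence f) as (A & HA & HK1 & Haccept & Hreject).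
  destruct (Hf (code A)) as [[[A' [E Hdef]] H1] | [Hnot H0]].
  - apply code_inj in E. subst A'.
    destruct (Haccept H1) as [M [HM Hiso]].
    exact (not_defining_of_models A M K1 HM HK1 Hiso Hdef).
  - apply Hnot. exists A. split; [reflexivity |].
    exact (defining_of_unique_model A K1 HA K1_is_graph HK1 (Hreject H0)).
Qed.
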